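(* Suppose that in a spherical tiling by angle congruent pentagons an angle value $\theta$ appears at no degree $3$ vertex. Let $v_k$ be the number of vertices of degree $k$. Then: (1) there is at most one angle value with this property; (2) $\theta$ appears exactly once among the five angles of the pentagon; (3) $2v_4+v_5\ge 12$; (4) there is a vertex of one of the following kinds: a degree $4$ vertex whose corners have angles $\alpha,\theta,\theta,\theta$ with $\alpha\neq\theta$; a degree $4$ vertex all of whose corners have angle $\theta$; or a degree $5$ vertex all of whose corners have angle $\theta$.
   Context: A spherical tiling by angle congruent pentagons is a graph embedded in the sphere whose faces (tiles) are all pentagons, the tiling being edge-to-edge with every vertex of degree at least $3$; each corner of each tile carries a positive real angle, the angles at every vertex sum to $2\pi$, and all tiles have the same multiset of five corner angles (the ''pentagon''). An angle value appears at a vertex if some corner at that vertex has that angle. *)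

From Stdlib Require Import Reals List Permutation.
From mathcomp Require Import all_boot.

Set Implicit Arguments.
Unset Strict Implicit.
Unset Printing Implicit Defensive.

(* A tiling of the sphere is encoded as a combinatorial map on a finite
   set of darts D:
   - sigma : D -> D  rotates darts around their common vertex
                      (vertices = sigma-orbits, degree = orbit size),
   - alpha : D -> D  fixed-point-free involution (edges = alpha-orbits),
   - faces (tiles)  = orbits of  phi := sigma \o alpha.
   Each dart y is identified with the corner of the tile (phi-orbit of y)
   located at the vertex (sigma-orbit of y) between the darts
   sigma^-1 y and y; this is a bijection darts <-> corners, each corner
   lying in exactly one vertex and exactly one tile.  *)

Definition face_perm (D : finType) (sigma alpha : D -> D) : D -> D :=
  fun d => sigma (alpha d).

Definition map_connected (D : finType) (sigma alpha : D -> D) : Prop :=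
  forall x y : D, connect (fun a b => (b == sigma a) || (b == alpha a)) x y.

Definition spherical_map (D : finType) (sigma alpha : D -> D) : Prop :=
  [/\ injective sigma,
      (forall d, alpha (alpha d) = d /\ alpha d <> d),
      map_connected sigma alpha &
      (fcard sigma D + fcard (face_perm sigma alpha) D
         = fcard alpha D + 2)%N ].

Definition sumR (s : list R) : R := fold_right Rplus R0 s.

Definition vertex_angles (D : finType) (sigma : D -> D) (ang : D -> R) (d : D)
  : list R := List.map ang (orbit sigma d).

Definition tile_angles (D : finType) (sigma alpha : D -> D) (ang : D -> R)
  (d : D) : list R := List.map ang (orbit (face_perm sigma alpha) d).

Definition degree (D : finType) (sigma : D -> D) (d : D) : nat := order sigma d.

(* spherical tiling by angle congruent pentagons, with pentagon [pent]
   (the multiset of the five angle values, as a list up to permutation) *)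
Definition angle_congruent_pentagon_tiling (D : finType) (sigma alpha : D -> D)
  (ang : D -> R) (pent : list R) : Prop :=
  spherical_map sigma alpha /\
  (forall d, order (face_perm sigma alpha) d = 5%N) /\
  (forall d, (3 <= degree sigma d)%N) /\
  (forall d, Rlt R0 (ang d)) /\
  (forall d, sumR (vertex_angles sigma ang d) = Rmult (IZR 2%Z) PI) /\
  (forall d, Permutation (tile_angles sigma alpha ang d) pent).

Definition appears_at (D : finType) (sigma : D -> D) (ang : D -> R)
  (th : R) (d : D) : Prop :=
  exists d', fconnect sigma d d' /\ ang d' = th.

Definition absent_at_deg3 (D : finType) (sigma : D -> D) (ang : D -> R)
  (pent : list R) (th : R) : Prop :=
  In th pent /\
  forall d, degree sigma d = 3%N -> ~ appears_at sigma ang th d.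

Definition num_vertices_deg (D : finType) (sigma : D -> D) (k : nat) : nat :=
  fcard sigma [pred d | order sigma d == k].

Definition all_corners (D : finType) (sigma : D -> D) (ang : D -> R)
  (th : R) (d : D) : Prop :=
  forall d', fconnect sigma d d' -> ang d' = th.

From Stdlib Require Import Reals List Permutation.
From mathcomp Require Import all_boot.
From mathcomp Require Import zify.

(* Let the combinatorial map have N darts (= corners), V
   vertices, E edges and F tiles.  Every tile is a pentagon and every edge
   has two darts, so N = 5F = 2E, and Euler's formula V + F = E + 2 becomes
   10 V = 3 N + 20.  The argument never uses the angle sums: it is pure
   counting (discharging) of the corners whose angle lies in a set Q of
   values that is absent from all degree-3 vertices.  Such corners number
   (N / 5) * (multiplicity of Q in the pentagon).
   - The vertex bound  c + 12 <= 4 n  (n = degree, c = Q-corners at the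
     vertex), summed over all vertices, gives that Q occurs at most once in
     the pentagon; this yields (1) and (2).
   - The finer bound  c + 6 <= 2 n + w(n, c),  where w weighs "rich"
     vertices (degree 4 with >= 3 Q-corners, degree 5 with 5 Q-corners),
     summed, gives  sum of w >= 12 when Q occurs exactly once; this yields
     (3) and, since some vertex must then be rich, (4). *)

Section OrbitSums.

Context {T : finType} {f : T -> T} (f_inj : injective f).

Lemma froot_orbitE r d : froots f r -> (froot f d == r) = (d \in orbit f r).
Proof.
move=> /eqP root_r; rewrite -fconnect_orbit -{1}root_r root_connect.
  by rewrite fconnect_sym.
exact: fconnect_sym.
Qed.

Lemma sum_orbit_count (P : pred T) :
  \sum_(r | froots f r) count P (orbit f r) = #|P|.
Proof.
rewrite -sum1_card [RHS](partition_big (froot f) (froots f)) /=; last first.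
  by move=> d _; apply: roots_root; exact: fconnect_sym.
apply: eq_bigr => r root_r; rewrite sum1_card -size_filter.
rewrite -(card_uniqP (filter_uniq _ (orbit_uniq f r))).
by apply: eq_card => d; rewrite mem_filter unfold_in /= froot_orbitE.
Qed.

Lemma sum_orbit_order : \sum_(r | froots f r) order f r = #|T|.
Proof.
rewrite -[#|T|](sum_orbit_count predT); apply: eq_bigr => r _.
by rewrite count_predT size_orbit.
Qed.

Lemma sum_orbit_bound (P : pred T) (k a : nat) (w : nat -> nat -> nat) :
  (forall r, froots f r ->
     count P (orbit f r) + k <= a * order f r + w (order f r) (count P (orbit f r))) ->
  #|P| + k * fcard f T <=
    a * #|T| + \sum_(r | froots f r) w (order f r) (count P (orbit f r)).
Proof.
move=> local_bound.
have : \sum_(r | froots f r) (count P (orbit f r) + k) <=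
       \sum_(r | froots f r) (a * order f r + w (order f r) (count P (orbit f r))).
  exact: leq_sum.
rewrite !big_split /= -big_distrr /= sum_orbit_count sum_orbit_order.
rewrite sum_nat_const mulnC; congr (_ + _ * _ <= _).
by apply: eq_card => r; rewrite !inE andbT.
Qed.

End OrbitSums.

Lemma fcard_sum (T : finType) (f : T -> T) (a : pred T) :
  fcard f a = \sum_(r | froots f r) (a r : nat).
Proof. by rewrite -big_mkcondr /= sum1_card; apply: eq_card => r; rewrite !inE. Qed.

Definition eqR (x y : R) : bool := if Req_EM_T x y then true else false.

Lemma eqRP x y : reflect (x = y) (eqR x y).
Proof. by rewrite /eqR; case: (Req_EM_T x y) => h; constructor. Qed.

Lemma Permutation_count {A : Type} (p : pred A) {l1 l2 : list A} :
  Permutation l1 l2 -> count p l1 = count p l2.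
Proof. by elim=> //= [x l l' _ -> | x y l | l l' l'' _ -> _ ->] //; rewrite addnCA. Qed.

Lemma In_count_gt0 {A : Type} (p : pred A) {x : A} {l : list A} :
  In x l -> p x -> 0 < count p l.
Proof. by elim: l => //= y l IH [<- -> | /IH px /px] //; rewrite addn_gt0 orbC => ->. Qed.

Lemma count_eq1_split (th : R) (l : list R) :
  count (eqR^~ th) l = 1 ->
  exists l1 l2, l = l1 ++ th :: l2 /\ ~ In th l1 /\ ~ In th l2.
Proof.
have notin s : count (eqR^~ th) s = 0 -> ~ In th s.
  by move=> s0 /(In_count_gt0 (eqR^~ th)) /(_ (introT (eqRP th th) erefl)); rewrite s0.
elim: l => //= x l IH; case: eqRP => [-> | x_th] /=.
  by rewrite add1n => -[/notin l0]; exists [::], l; split=> //; split.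
rewrite add0n => /IH [l1 [l2 [-> [th_l1 th_l2]]]]; exists (x :: l1), l2.
by split=> //; split=> //= -[/x_th | /th_l1].
Qed.

Lemma count_outlier_eq1 (th : R) (l : list R) :
  count (fun x => ~~ eqR x th) l = 1 ->
  exists a, a <> th /\ Permutation l (a :: nseq (size l).-1 th).
Proof.
have constant s : count (fun x => ~~ eqR x th) s = 0 -> s = nseq (size s) th.
  by elim: s => //= x s IH; case: eqRP => //= -> /IH {1}->.
elim: l => //= x l IH; case: eqRP => [-> | x_th] /=.
  move=> /IH [a [a_th perm_l]]; exists a; split=> //.
  case: l {IH} perm_l => [|y l] /= perm_l; first by have := Permutation_length perm_l.
  exact: Permutation_trans (Permutation.perm_skip th perm_l) (Permutation.perm_swap _ _ _).
by move=> /eqP; rewrite eqSS => /eqP /constant l_th; exists x; rewrite {1}l_th.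
Qed.

Lemma vertex_bound_coarse n c :
  3 <= n -> c <= n -> (n = 3 -> c = 0) -> c + 12 <= 4 * n.
Proof. by move=> n_ge3 c_le_n c0; case: (n =P 3) => [/c0|]; lia. Qed.

Definition rich_weight (n c : nat) : nat :=
  if (n == 4) && (2 < c) then 2 else if (n == 5) && (4 < c) then 1 else 0.

Lemma vertex_bound_fine n c :
  3 <= n -> c <= n -> (n = 3 -> c = 0) -> c + 6 <= 2 * n + rich_weight n c.
Proof.
move=> n_ge3 c_le_n c0; rewrite /rich_weight.
case: ifP => [|not_rich4]; first lia.
case: ifP => [|not_rich5]; first lia.
by case: (n =P 3) => [/c0|]; lia.
Qed.

Lemma rich_weight_le n c : rich_weight n c <= 2 * (n == 4) + (n == 5).
Proof. by rewrite /rich_weight; case: ifP => [|_]; [|case: ifP]; lia. Qed.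

Section PentagonalTiling.

Context {D : finType} {sigma alpha : D -> D} {ang : D -> R} {pent : list R}.
Context (tiling : angle_congruent_pentagon_tiling sigma alpha ang pent).

Lemma sigma_inj : injective sigma.
Proof. by case: tiling => -[]. Qed.

Lemma alpha_inj : injective alpha.
Proof.
case: tiling => -[_ alpha_inv _ _] _.
by apply: (can_inj (g := alpha)) => d; case: (alpha_inv d).
Qed.

Lemma face_perm_inj : injective (face_perm sigma alpha).
Proof. by move=> x y /sigma_inj /alpha_inj. Qed.

Lemma euler_darts : 10 * fcard sigma D = 3 * #|D| + 20.
Proof.
case: tiling => -[_ alpha_inv _ euler] [face5 _].
have faces : fcard (face_perm sigma alpha) D * 5 = #|D|.
  apply: fcard_order_set => //; first exact: face_perm_inj.
  by apply/subsetP => d _; rewrite inE face5.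
have edges : fcard alpha D * 2 = #|D|.
  apply: fcard_order_set => //; first exact: alpha_inj.
  apply/subsetP => d _; rewrite inE.
  case: (alpha_inv d) => aad ad.
  rewrite (@order_cycle _ _ [:: d; alpha d] _ _ d) //=.
  - by rewrite aad !eqxx.
  - by rewrite inE andbT; apply/negP => /eqP /esym.
  - by rewrite inE eqxx.
lia.
Qed.

Definition corners_with (Q : pred R) : pred D := fun d => Q (ang d).

(* Corners whose angle lies in Q: (N / 5) times the multiplicity of Q in
   the pentagon, since every tile carries the angles of the pentagon. *)
Lemma corner_count (Q : pred R) :
  5 * #|corners_with Q| = #|D| * count Q pent.
Proof.
case: tiling => _ [face5 [_ [_ [_ tiles]]]].
rewrite -(sum_orbit_count face_perm_inj) -(sum_orbit_order face_perm_inj).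
rewrite big_distrr big_distrl /=; apply: eq_bigr => r _.
by rewrite face5 -(Permutation_count Q (tiles r)) /tile_angles count_map.
Qed.

Definition avoids_degree3 (Q : pred R) : Prop :=
  forall d, degree sigma d = 3 -> forall d', fconnect sigma d d' -> ~~ Q (ang d').

Lemma absent_avoids {th} :
  absent_at_deg3 sigma ang pent th -> avoids_degree3 (eqR^~ th).
Proof. by move=> [_ absent] d d3 d' dd'; apply/eqRP => ang_d'; apply: (absent d d3); exists d'. Qed.

Lemma avoids_predU {Q1 Q2 : pred R} :
  avoids_degree3 Q1 -> avoids_degree3 Q2 -> avoids_degree3 (predU Q1 Q2).
Proof. by move=> av1 av2 d d3 d' dd'; rewrite negb_or (av1 d) ?(av2 d). Qed.

Lemma vertex_profile (Q : pred R) r :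
  avoids_degree3 Q ->
  [/\ 3 <= order sigma r,
      count (corners_with Q) (orbit sigma r) <= order sigma r
    & order sigma r = 3 -> count (corners_with Q) (orbit sigma r) = 0].
Proof.
case: tiling => _ [_ [deg3 _]] avoid; split; first exact: deg3.
  by rewrite -size_orbit count_size.
move=> r3; apply/eqP; rewrite -leqn0 leqNgt -has_count; apply/hasPn => d.
by rewrite -fconnect_orbit; exact: avoid.
Qed.

Lemma avoided_multiplicity {Q : pred R} : avoids_degree3 Q -> count Q pent <= 1.
Proof.
move=> avoid.
have local r : froots sigma r ->
    count (corners_with Q) (orbit sigma r) + 12 <= 4 * order sigma r + 0.
  by move=> _; rewrite addn0; case: (vertex_profile Q r avoid); exact: vertex_bound_coarse.
have := sum_orbit_bound sigma_inj (corners_with Q) 12 4 (fun _ _ => 0) local.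
rewrite big1 // => bound; have corners := corner_count Q; have euler := euler_darts.
rewrite leqNgt; apply/negP => mult_ge2.
have : #|D| * 2 <= #|D| * count Q pent by rewrite leq_mul2l mult_ge2 orbT.
lia.
Qed.

Lemma rich_weight_total {Q : pred R} :
  avoids_degree3 Q -> count Q pent = 1 ->
  12 <= \sum_(r | froots sigma r)
          rich_weight (order sigma r) (count (corners_with Q) (orbit sigma r)).
Proof.
move=> avoid once.
have local r : froots sigma r ->
    count (corners_with Q) (orbit sigma r) + 6 <=
    2 * order sigma r + rich_weight (order sigma r) (count (corners_with Q) (orbit sigma r)).
  by move=> _; case: (vertex_profile Q r avoid); exact: vertex_bound_fine.
have bound := sum_orbit_bound sigma_inj (corners_with Q) 6 2 rich_weight local.
have corners := corner_count Q; rewrite once muln1 in corners.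
have := euler_darts; lia.
Qed.

Lemma rich_vertex_kinds th r :
  0 < rich_weight (order sigma r) (count (corners_with (eqR^~ th)) (orbit sigma r)) ->
  (degree sigma r = 4 /\
     exists a : R, a <> th /\
       Permutation (vertex_angles sigma ang r) (a :: th :: th :: th :: nil))
  \/ (degree sigma r = 4 /\ all_corners sigma ang th r)
  \/ (degree sigma r = 5 /\ all_corners sigma ang th r).
Proof.
set c := count _ _; have c_le : c <= order sigma r by rewrite -size_orbit count_size.
have all_th : c = order sigma r -> all_corners sigma ang th r.
  move=> c_full d'; rewrite fconnect_orbit => d'_r.
  have : all (corners_with (eqR^~ th)) (orbit sigma r).
    by rewrite all_count size_orbit -/c c_full.
  by move=> /allP /(_ d' d'_r) /eqRP.
rewrite /rich_weight /degree.
case: ifP => [/andP [/eqP r4 c_gt2] _ | _]; last first.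
  case: ifP => // /andP [/eqP r5 c_gt4] _.
  by right; right; split=> //; apply: all_th; lia.
rewrite r4 in c_le all_th.
case: (c =P 4) => [/all_th | c_ne4]; first by right; left.
left; split=> //.
have [|a [a_th perm]] := @count_outlier_eq1 th (vertex_angles sigma ang r).
  have := count_predC (corners_with (eqR^~ th)) (orbit sigma r).
  rewrite /vertex_angles count_map size_orbit r4 -/c.
  by rewrite (@eq_count _ _ (predC (corners_with (eqR^~ th)))) //; lia.
by exists a; rewrite /vertex_angles size_map size_orbit r4 in perm.
Qed.

Lemma absent_value_once {th} :
  absent_at_deg3 sigma ang pent th -> count (eqR^~ th) pent = 1.
Proof.
move=> absent; have := avoided_multiplicity (absent_avoids absent).
have := In_count_gt0 (eqR^~ th) absent.1 (introT (eqRP th th) erefl); lia.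
Qed.

(* Two distinct absent values would together occur twice: statement (1). *)
Lemma absent_value_unique {th th'} :
  absent_at_deg3 sigma ang pent th -> absent_at_deg3 sigma ang pent th' -> th' = th.
Proof.
move=> absent absent'; case: (eqRP th' th) => // th'_th; exfalso.
have := avoided_multiplicity (avoids_predU (absent_avoids absent) (absent_avoids absent')).
rewrite -(leq_add2r (count (predI (eqR^~ th) (eqR^~ th')) pent)) count_predUI.
have -> : count (predI (eqR^~ th) (eqR^~ th')) pent = 0.
  rewrite (@eq_count _ _ pred0) ?count_pred0 // => x /=.
  by case: (eqRP x th) => [->|] //=; apply/eqRP => /esym.
by have := absent_value_once absent; have := absent_value_once absent'; lia.
Qed.

Lemma degree45_bound {Q : pred R} :
  avoids_degree3 Q -> count Q pent = 1 ->
  12 <= 2 * num_vertices_deg sigma 4 + num_vertices_deg sigma 5.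
Proof.
move=> avoid once; apply: leq_trans (rich_weight_total avoid once) _.
rewrite /num_vertices_deg !fcard_sum big_distrr -big_split.
by apply: leq_sum => r _; exact: rich_weight_le.
Qed.

Lemma special_vertex_exists {th} :
  avoids_degree3 (eqR^~ th) -> count (eqR^~ th) pent = 1 ->
  exists d : D,
     (degree sigma d = 4 /\
        exists a : R, a <> th /\
          Permutation (vertex_angles sigma ang d) (a :: th :: th :: th :: nil))
     \/ (degree sigma d = 4 /\ all_corners sigma ang th d)
     \/ (degree sigma d = 5 /\ all_corners sigma ang th d).
Proof.
move=> avoid once; have rich := rich_weight_total avoid once.
have [r _ /rich_vertex_kinds kinds] : exists2 r, froots sigma r & 0 < rich_weight
    (order sigma r) (count (corners_with (eqR^~ th)) (orbit sigma r)).
  apply/exists_inP; apply: contraLR rich => /exists_inPn zero.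
  by rewrite big1 // => r /zero; rewrite lt0n negbK => /eqP.
by exists r.
Qed.

End PentagonalTiling.

Theorem lemma4 (D : finType) (sigma alpha : D -> D) (ang : D -> R)
  (pent : list R) (th : R) :
  angle_congruent_pentagon_tiling sigma alpha ang pent ->
  absent_at_deg3 sigma ang pent th ->
  (* (1) uniqueness *)
  (forall th', absent_at_deg3 sigma ang pent th' -> th' = th) /\
  (* (2) th appears exactly once in the pentagon *)
  (exists l1 l2, pent = l1 ++ th :: l2 /\ ~ In th l1 /\ ~ In th l2) /\
  (* (3) 2 v_4 + v_5 >= 12 *)
  (12 <= 2 * num_vertices_deg sigma 4 + num_vertices_deg sigma 5)%N /\
  (* (4) special vertex *)
  (exists d : D,
     (degree sigma d = 4%N /\
        exists a : R, a <> th /\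
          Permutation (vertex_angles sigma ang d) (a :: th :: th :: th :: nil))
     \/ (degree sigma d = 4%N /\ all_corners sigma ang th d)
     \/ (degree sigma d = 5%N /\ all_corners sigma ang th d)).
Proof.
move=> tiling absent; have avoid := absent_avoids absent.
have once := absent_value_once tiling absent.
split; first by move=> th' absent'; exact: (absent_value_unique tiling absent absent').
split; first exact: count_eq1_split.
split; first exact: (degree45_bound tiling avoid once).
exact: (special_vertex_exists tiling avoid once).
Qed.
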